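(* Let $m$ be a positive integer and $G$ a connected, almost asymmetric graph. If $n(G)-\max\{|v^*|:\ v^*\in V(G^* )\}\neq m$, then $D(G)\neq n(G)-m$.
   Context: All graphs are finite and simple; $n(G)=|V(G)|$; $N_G(u)$ is the neighborhood of $u$. A distinguishing coloring of a graph $G$ is a (not necessarily proper) vertex coloring such that the only automorphism of $G$ mapping every vertex to a vertex of the same color is the identity; the distinguishing number $D(G)$ is the minimum number of colors in a distinguishing coloring of $G$. Two distinct vertices $u,v$ are twins if $N_G(u)\setminus\{v\}=N_G(v)\setminus\{u\}$. The relation $u\equiv v$ iff $u=v$ or $u,v$ are twins is an equivalence relation; the class of $v$ is denoted $v^*$. The twin graph $G^*$ has the equivalence classes as vertices, distinct classes $u^*,v^*$ being adjacent iff $uv\in E(G)$. A graph $G$ is almost asymmetric if no automorphism of $G$ maps a vertex of one twin class to a vertex of a different twin class. *)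

(* A finite simple graph is a symmetric irreflexive relation
   e on a finType T. *)
From mathcomp Require Import all_boot all_order all_algebra all_fingroup.
Set Implicit Arguments. Unset Strict Implicit. Unset Printing Implicit Defensive.

Section Graphs.
Variables (T : finType) (e : rel T).

Definition order_of_graph : nat := #|T|.

Definition nbhd (u : T) : {set T} := [set w | e u w].

Definition is_aut (s : {perm T}) : bool := [forall x, forall y, e (s x) (s y) == e x y].

Definition distinguishing (k : nat) (c : T -> 'I_k) : bool :=
  [forall s : {perm T}, (is_aut s && [forall x, c (s x) == c x]) ==> (s == 1%g)].

Definition has_dist_coloring (k : nat) : bool :=
  [exists c : {ffun T -> 'I_k}, distinguishing c].

Lemma has_dist_coloring_card : has_dist_coloring #|T|.
Proof.
apply/existsP; exists (finfun (@enum_rank T)).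
apply/forallP => s; apply/implyP => /andP [_ /forallP H].
apply/eqP/permP => x; rewrite perm1.
by have /eqP := H x; rewrite !ffunE => /enum_rank_inj.
Qed.

Lemma has_dist_coloring_ex : exists k, has_dist_coloring k.
Proof. by exists #|T|; exact: has_dist_coloring_card. Qed.

Definition dist_number : nat := ex_minn has_dist_coloring_ex.

Definition twins (u v : T) : bool :=
  (u != v) && (nbhd u :\ v == nbhd v :\ u).

Definition twin_class (v : T) : {set T} := [set u | (u == v) || twins u v].

(* maximum size of a twin class, i.e. max |v^ * | over classes of G^ * *)
Definition max_twin_class_size : nat := (\max_(v : T) #|twin_class v|)%N.

Definition almost_asymmetric : Prop :=
  forall s : {perm T}, is_aut s -> forall v, twin_class (s v) = twin_class v.

Definition connected_graph : Prop := forall x y : T, connect e x y.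

End Graphs.

From mathcomp Require Import all_boot all_order all_algebra all_fingroup.
From mathcomp Require Import ring.

Set Implicit Arguments.
Unset Strict Implicit.
Unset Printing Implicit Defensive.

(* Swapping two twins is an automorphism, so a distinguishing coloring must be
   injective on every twin class: D(G) >= max |v^*|.  Conversely, numbering the
   vertices inside each twin class is distinguishing when G is almost
   asymmetric, since an automorphism preserving the colors then stabilizes each
   class and the numbering within it.  Hence D(G) = max |v^*|, and the
   corollary is arithmetic. *)

Section Twins.
Variables (T : finType) (e : rel T).
Hypotheses (e_sym : symmetric e) (e_irr : irreflexive e).

Lemma twinsP u w :
  reflect (u != w /\ forall z, z != u -> z != w -> e u z = e w z) (twins e u w).
Proof.
apply: (iffP andP) => -[uw Huw]; split=> //.
  move=> z zu zw; have /setP/(_ z) := eqP Huw.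
  by rewrite !inE zu zw.
apply/eqP/setP => z; rewrite !inE.
case: (eqVneq z w) => [->|zw]; first by rewrite e_irr andbF.
case: (eqVneq z u) => [->|zu]; first by rewrite e_irr.
by rewrite Huw.
Qed.

Lemma twins_sym u w : twins e u w -> twins e w u.
Proof.
case/twinsP=> uw Huw; apply/twinsP; split; first by rewrite eq_sym.
by move=> z zw zu; rewrite Huw.
Qed.

Lemma twins_trans v u w : twins e u v -> twins e v w -> u != w -> twins e u w.
Proof.
case/twinsP=> uv Huv /twinsP[vw Hvw] uw; apply/twinsP; split=> // z zu zw.
case: (eqVneq z v) => [->{z zu zw}|zv]; last by rewrite Huv // Hvw.
by rewrite e_sym (Hvw u) // e_sym (Huv w) 1?eq_sym // e_sym.
Qed.

Lemma mem_twin_class_twins v u w :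
  u \in twin_class e v -> w \in twin_class e v -> u != w -> twins e u w.
Proof.
rewrite !inE; case: (eqVneq u v) => [->|uv] /=;
  case: (eqVneq w v) => [->|wv] //= Hu Hw uw.
- exact: twins_sym.
- exact: twins_trans Hu (twins_sym Hw) uw.
Qed.

Lemma tperm_twins_aut u w : twins e u w -> is_aut e (tperm u w).
Proof.
case/twinsP=> uw Huw; apply/forallP => x; apply/forallP => y; apply/eqP.
case: tpermP => [->|->|/eqP xu /eqP xw]; case: tpermP => [->|->|/eqP yu /eqP yw];
  rewrite ?e_irr // 1?[e x _]e_sym 1?[e x _]e_sym Huw //.
Qed.

End Twins.

Section DistinguishingNumber.
Variables (T : finType) (e : rel T).
Hypotheses (e_sym : symmetric e) (e_irr : irreflexive e).

Lemma distinguishing_twins_neq k (c : T -> 'I_k) u w :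
  distinguishing e c -> twins e u w -> c u != c w.
Proof.
move=> /forallP/(_ (tperm u w)) dist_c Tuw; apply/eqP => cuw.
have uw : u != w by case/andP: Tuw.
have /eqP/permP/(_ u) : tperm u w == 1%g.
  apply: (implyP dist_c); rewrite (tperm_twins_aut e_sym e_irr Tuw) /=.
  by apply/forallP => x; case: tpermP => [->|->|] //; rewrite cuw.
by rewrite perm1 tpermL => /eqP; rewrite eq_sym (negbTE uw).
Qed.

Lemma max_twin_class_size_le k (c : T -> 'I_k) :
  distinguishing e c -> max_twin_class_size e <= k.
Proof.
move=> dist_c; apply/bigmax_leqP => v _.
rewrite -[k]card_ord; apply: (leq_card_in c) => x y Hx Hy /eqP cxy.
apply: contraTeq cxy => xy.
apply: distinguishing_twins_neq => //.
exact: mem_twin_class_twins e_sym e_irr _ _ _ Hx Hy xy.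
Qed.

Lemma index_twin_class_lt x :
  index x (enum (twin_class e x)) < max_twin_class_size e.
Proof.
apply: leq_trans (leq_bigmax x).
by rewrite cardE index_mem mem_enum inE eqxx.
Qed.

Lemma has_dist_coloring_max_twin_class_size :
  almost_asymmetric e -> has_dist_coloring e (max_twin_class_size e).
Proof.
move=> AA; apply/existsP; exists [ffun x => Ordinal (index_twin_class_lt x)].
apply/forallP => s; apply/implyP => /andP[aut_s /forallP col_s].
apply/eqP/permP => x; rewrite perm1.
have /eqP/(congr1 val) := col_s x; rewrite !ffunE /= (AA s aut_s x).
move/(index_inj x); apply; rewrite mem_enum; last by rewrite inE eqxx.
by rewrite -(AA s aut_s x) inE eqxx.
Qed.

Theorem dist_number_almost_asymmetric :
  almost_asymmetric e -> dist_number e = max_twin_class_size e.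
Proof.
move=> AA; rewrite /dist_number; case: ex_minnP => D /existsP[c dist_c] D_min.
apply/eqP; rewrite eqn_leq (max_twin_class_size_le dist_c) andbT.
exact/D_min/has_dist_coloring_max_twin_class_size.
Qed.

End DistinguishingNumber.

Theorem corollary4p4 (T : finType) (e : rel T) (m : nat) :
  symmetric e -> irreflexive e -> (0 < m)%N ->
  connected_graph e -> almost_asymmetric e ->
  (#|T|%:Z - (max_twin_class_size e)%:Z != m%:Z)%R ->
  ((dist_number e)%:Z != #|T|%:Z - m%:Z)%R.
Proof.
move=> e_sym e_irr _ _ AA; rewrite dist_number_almost_asymmetric //.
by apply: contra => /eqP ->; apply/eqP; ring.
Qed.
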